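(* Let $(H,+,\circ)$ be a commutative multiplicative hyperring with identity $1$, and let $P$ be an sdf-absorbing strong $\mathcal{C}$-hyperideal of $H$. Then the following are equivalent: (i) whenever $0\neq x,y\in H$ and $x^2-y^2\subseteq P$, both $x-y\in P$ and $x+y\in P$; (ii) $1+1\in P$; (iii) the quotient hyperring $H/P$ is of characteristic $2$.
   Context: A commutative multiplicative hyperring $(H,+,\circ)$ consists of an abelian group $(H,+)$ and an associative, commutative hyperoperation $\circ: H\times H\to P^*(H)$ with $x\circ(y+z)\subseteq x\circ y+x\circ z$ and $x\circ(-y)=-(x\circ y)=(-x)\circ y$. For subsets $A,B$, $A\circ B=\bigcup_{a\in A,b\in B}a\circ b$, $A\pm B=\{a\pm b\}$; $x^2=x\circ x$. Identity: $x\in x\circ 1$ for all $x$. A hyperideal is a nonempty $P$ with $x-y\in P$ and $r\circ x\subseteq P$ for $x,y\in P$, $r\in H$. The quotient $H/P=\{x+P\}$ has the usual coset addition and $(x+P)*(y+P)=\{z+P: z\in x\circ y\}$. A hyperring has characteristic $\alpha$ if $\alpha$ is the least positive integer with $\alpha x=0$ for all $x$. Let $\mathcal{C}=\{c_1\circ\cdots\circ c_n: c_i\in H,n\in\mathbb{N}\}$ and $\mathfrak{C}=\{\sum_{i=1}^n C_i: C_i\in\mathcal{C}\}$; $P$ is a strong $\mathcal{C}$-hyperideal if for every $D\in\mathfrak{C}$, $D\cap P\neq\varnothing$ implies $D\subseteq P$. A proper hyperideal $P$ is sdf-absorbing if whenever $0\neq x,y\in H$ and $x^2-y^2\subseteq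 P$, then $x-y\in P$ or $x+y\in P$. *)

From HB Require Import structures.
From mathcomp Require Import all_boot all_algebra.
Set Implicit Arguments. Unset Strict Implicit. Unset Printing Implicit Defensive.
Import GRing.Theory.
Local Open Scope ring_scope.

(* Subsets of H are predicates H -> Prop; a hyperoperation is given by its
   graph: [hmul x y z] means z \in x o y. *)
Definition hset (H : Type) := H -> Prop.

Record cmhyperring (H : zmodType) := CMHyperring {
  hmul : H -> H -> H -> Prop;
  hmul_nonempty : forall x y, exists z, hmul x y z;
  hmul_comm : forall x y z, hmul x y z <-> hmul y x z;
  hmul_assoc : forall x y z w,
      (exists u, hmul y z u /\ hmul x u w) <-> (exists u, hmul x y u /\ hmul u z w);
  hmul_distr : forall x y z w, hmul x (y + z) w ->
      exists a b, hmul x y a /\ hmul x z b /\ w = a + b;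
  hmul_oppr : forall x y w, hmul x (- y) w <-> hmul x y (- w);
  hmul_oppl : forall x y w, hmul (- x) y w <-> hmul x y (- w)
}.

Section Hyper.
Variables (H : zmodType) (R : cmhyperring H).

Definition is_identity (e : H) : Prop := forall x, hmul R x e x.

Definition set1h (x : H) : hset H := fun z => z = x.
Definition setmulh (A B : hset H) : hset H :=
  fun z => exists a b, A a /\ B b /\ hmul R a b z.
Definition setaddh (A B : hset H) : hset H :=
  fun z => exists a b, A a /\ B b /\ z = a + b.
Definition subseth (A B : hset H) : Prop := forall z, A z -> B z.
Definition eqseth (A B : hset H) : Prop := forall z, A z <-> B z.

(* c_1 o c_2 o ... o c_n, given as c_1 and the list [c_2; ...; c_n] *)
Definition hprod (c : H) (cs : seq H) : hset H :=
  foldl (fun A x => setmulh A (set1h x)) (set1h c) cs.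

(* C_1 + ... + C_n with C_i in the class C, given as C_1 and [C_2; ...; C_n] *)
Definition hsum (C : H * seq H) (Cs : seq (H * seq H)) : hset H :=
  foldl (fun A p => setaddh A (hprod p.1 p.2)) (hprod C.1 C.2) Cs.

Definition hyperideal (P : hset H) : Prop :=
  (exists x, P x) /\
  (forall x y, P x -> P y -> P (x - y)) /\
  (forall r x, P x -> subseth (setmulh (set1h r) (set1h x)) P).

Definition proper (P : hset H) : Prop := exists x, ~ P x.

(* strong C-hyperideal: every D in frak C meeting P is contained in P *)
Definition strong_C_hyperideal (P : hset H) : Prop :=
  hyperideal P /\
  forall C Cs, (exists z, hsum C Cs z /\ P z) -> subseth (hsum C Cs) P.

Definition sq_diff (x y : H) : hset H :=
  fun z => exists a b, hmul R x x a /\ hmul R y y b /\ z = a - b.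

Definition sdf_absorbing (P : hset H) : Prop :=
  hyperideal P /\ proper P /\
  forall x y, x != 0 -> y != 0 -> subseth (sq_diff x y) P ->
    P (x - y) \/ P (x + y).

(* Quotient H/P: elements are cosets x + P, coset addition, zero = 0 + P = P *)
Definition coset (P : hset H) (x : H) : hset H := fun z => P (z - x).

Definition quot_nmul (P : hset H) (n : nat) (X : hset H) : hset H :=
  iter n (fun Y => setaddh X Y) (coset P 0).

Definition quot_has_char (P : hset H) (n : nat) : Prop :=
  (0 < n)%N /\
  (forall x, eqseth (quot_nmul P n (coset P x)) (coset P 0)) /\
  (forall m, (0 < m < n)%N ->
     ~ (forall x, eqseth (quot_nmul P m (coset P x)) (coset P 0))).

End Hyper.

From mathcomp Require Import all_boot all_algebra.
Local Open Scope ring_scope.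
Import GRing.Theory.

Set Implicit Arguments.
Unset Strict Implicit.

(* In H/P one has n(x + P) = nx + P, so H/P has characteristic 2 iff
   x + x is in P for every x (characteristic 1 is excluded as P is proper).
   Strongness upgrades 1 + 1 in P to x + x in P for all x: the sum
   x o 1 + x o 1 meets x o (1 + 1), a subset of P, hence lies in P, and it
   contains x + x.  Once y + y is in P, x - y is in P iff x + y is, which
   turns the sdf-absorbing disjunction into a conjunction.  Conversely,
   applying (i) to x = y = 1 needs 1^2 - 1^2 in P, which holds because
   x o x + (-x) o x contains 0 and hence lies in P. *)

Section Hyperideal.
Variables (H : zmodType) (R : cmhyperring H) (P : hset H).
Hypothesis hP : hyperideal R P.

Lemma hyperideal0 : P 0.
Proof. by have [[x Px] [PB _]] := hP; rewrite -(subrr x); apply: PB. Qed.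

Lemma hyperidealB x y : P x -> P y -> P (x - y).
Proof. exact: hP.2.1. Qed.

Lemma hyperidealN x : P x -> P (- x).
Proof. by move=> Px; rewrite -sub0r; apply: hyperidealB => //; apply: hyperideal0. Qed.

Lemma hyperidealD x y : P x -> P y -> P (x + y).
Proof. by move=> Px Py; rewrite -[y]opprK; apply/hyperidealB/hyperidealN. Qed.

Lemma hyperideal_hmul r x y : P x -> hmul R r x y -> P y.
Proof. by move=> Px rxy; apply: (hP.2.2 r x Px); exists r, x. Qed.

Lemma hyperideal_sub_add x y : P (y *+ 2) -> P (x - y) <-> P (x + y).
Proof.
move=> P2y; rewrite mulr2n in P2y; split=> Pxy.
  have -> : x + y = x - y + (y + y) by rewrite addrA subrK.
  exact: hyperidealD.
have -> : x - y = x + y - (y + y) by rewrite opprD addrA addrK.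
exact: hyperidealB.
Qed.

Lemma identity_neq0 e : proper P -> is_identity R e -> e != 0.
Proof.
move=> [x nPx] he; apply/eqP=> e0; apply: nPx.
by apply: (hyperideal_hmul hyperideal0); rewrite -e0; apply: he.
Qed.

End Hyperideal.

Section StrongCHyperideal.
Variables (H : zmodType) (R : cmhyperring H) (P : hset H).
Hypothesis hstrong : strong_C_hyperideal R P.

Lemma hsum_prod2E x y u v z :
  hsum R (x, [:: y]) [:: (u, [:: v])] z <->
  exists a b, hmul R x y a /\ hmul R u v b /\ z = a + b.
Proof.
split=> [[a [b [[x' [y' [-> [-> ha]]]] [[u' [v' [-> [-> hb]]]] ->]]]] | [a [b [ha [hb ->]]]]].
  by exists a, b.
by exists a, b; split; [exists x, y | split; [exists u, v |]].
Qed.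

Lemma strongC_prod2_sum x y u v a b a' b' :
  hmul R x y a -> hmul R u v b -> P (a + b) ->
  hmul R x y a' -> hmul R u v b' -> P (a' + b').
Proof.
move=> ha hb Pab ha' hb'.
apply: (hstrong.2 (x, [:: y]) [:: (u, [:: v])]); last first.
  by apply/hsum_prod2E; exists a', b'.
by exists (a + b); split=> //; apply/hsum_prod2E; exists a, b.
Qed.

Lemma strongC_sq_diff_self x : subseth (sq_diff R x x) P.
Proof.
have hN a : hmul R x x a -> hmul R (- x) x (- a).
  by move=> ha; apply/hmul_oppl; rewrite opprK.
move=> _ [a [b [ha [hb ->]]]].
apply: (strongC_prod2_sum ha (hN a ha) _ ha (hN b hb)).
by rewrite subrr; apply: hyperideal0 hstrong.1.
Qed.

Lemma strongC_double e :
  is_identity R e -> P (e + e) -> forall y, P (y *+ 2).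
Proof.
move=> he Pee y; have [w hw] := hmul_nonempty R y (e + e).
have [a [b [ha [hb Ew]]]] := hmul_distr hw.
have Pab : P (a + b) by rewrite -Ew; exact: (hyperideal_hmul hstrong.1 Pee hw).
by rewrite mulr2n; apply: (strongC_prod2_sum ha hb Pab); apply: he.
Qed.

End StrongCHyperideal.

Section Quotient.
Variables (H : zmodType) (R : cmhyperring H) (P : hset H).
Hypothesis hP : hyperideal R P.

Lemma setaddhr (A B B' : hset H) :
  eqseth B B' -> eqseth (setaddh A B) (setaddh A B').
Proof.
by move=> BB' z; split=> -[a [b [Aa [Bb ->]]]]; exists a, b; split=> //; split=> //; apply/BB'.
Qed.

Lemma setaddh_coset x y :
  eqseth (setaddh (coset P x) (coset P y)) (coset P (x + y)).
Proof.
move=> z; split=> [[a [b [Pa [Pb ->]]]] | Pz].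
  by rewrite /coset opprD addrACA; exact: (hyperidealD hP Pa Pb).
exists x, (z - x); split; first by rewrite /coset subrr; apply: hyperideal0 hP.
by split; [rewrite /coset -addrA -opprD | rewrite addrC subrK].
Qed.

Lemma quot_nmul_coset n x :
  eqseth (quot_nmul P n (coset P x)) (coset P (x *+ n)).
Proof.
elim: n => [|n IHn] z; first by rewrite mulr0n.
rewrite /quot_nmul iterS mulrS.
exact: iff_trans (setaddhr _ IHn z) (setaddh_coset _ _ z).
Qed.

Lemma coset_eq0 x : eqseth (coset P x) (coset P 0) <-> P x.
Proof.
split=> [/(_ x) | Px z].
  by rewrite /coset subrr subr0 => /proj1; apply; apply: hyperideal0 hP.
rewrite /coset subr0; split=> Pz; last exact: (hyperidealB hP Pz Px).
by rewrite -(subrK x z); exact: (hyperidealD hP Pz Px).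
Qed.

Lemma quot_nmul_eq0 n :
  (forall x, eqseth (quot_nmul P n (coset P x)) (coset P 0)) <->
  (forall x, P (x *+ n)).
Proof.
split=> nX0 x.
  apply/coset_eq0 => z.
  exact: iff_trans (iff_sym (quot_nmul_coset n x z)) (nX0 x z).
move=> z; apply: iff_trans (quot_nmul_coset n x z) _.
exact: (coset_eq0 (x *+ n)).2 (nX0 x) z.
Qed.

Lemma quot_has_char2 : proper P -> quot_has_char P 2 <-> forall x, P (x *+ 2).
Proof.
move=> [x0 nPx0]; split=> [[_ [/quot_nmul_eq0 //]] | P2].
split=> //; split=> [|[|[|m]] //]; first exact/quot_nmul_eq0.
by move=> _ /quot_nmul_eq0 /(_ x0); rewrite mulr1n.
Qed.

End Quotient.

Theorem mainTheorem3 (H : zmodType) (R : cmhyperring H) (e : H)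
  (he : is_identity R e) (P : H -> Prop)
  (hsdf : sdf_absorbing R P) (hstrong : strong_C_hyperideal R P) :
  ((forall x y : H, x != 0 -> y != 0 -> subseth (sq_diff R x y) P ->
      P (x - y) /\ P (x + y)) <-> P (e + e))
  /\ (P (e + e) <-> quot_has_char P 2).
Proof.
have [hP [Pproper sdf]] := hsdf.
have Pee_double : P (e + e) <-> forall y, P (y *+ 2).
  split=> [| /(_ e)]; last by rewrite mulr2n.
  exact (strongC_double hstrong he).
split; last exact: iff_trans Pee_double (iff_sym (quot_has_char2 hP Pproper)).
have e_neq0 := identity_neq0 hP Pproper he.
split=> [sq_abs | Pee x y x_neq0 y_neq0 Pxy].
  exact (sq_abs e e e_neq0 e_neq0 (strongC_sq_diff_self hstrong (x:=e))).2.
have Pxy_iff := hyperideal_sub_add hP x (Pee_double.1 Pee y).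
by case: (sdf x y x_neq0 y_neq0 Pxy) => Pxy'; split=> //; apply/Pxy_iff.
Qed.
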